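(* For any connected graphs $G$ and $H$, $$\beta (G_{SR}\boxtimes H_{SR})\ge \beta ((G\boxtimes H)_{SR})\ge \beta(G_{SR}\oplus H_{SR}).$$
   Context: $\beta(F)$ denotes the independence number of a graph $F$ (largest size of a set of pairwise non-adjacent vertices). For a connected graph $G$ with shortest-path distance $d_G$: $u$ is maximally distant from $v$ if for every neighbor $w$ of $u$, $d_G(v,w)\le d_G(u,v)$; $u,v$ are mutually maximally distant if each is maximally distant from the other. The strong resolving graph $G_{SR}$ has vertex set $V(G)$, with $u,v$ adjacent iff they are mutually maximally distant in $G$. The strong product $G\boxtimes H$ has vertex set $V(G)\times V(H)$, with $(a,b)\sim(c,d)$ iff ($a=c$ and $bd\in E(H)$) or ($ac\in E(G)$ and $b=d$) or ($ac\in E(G)$ and $bd\in E(H)$). The Cartesian sum $G\oplus H$ has vertex set $V(G)\times V(H)$, with $(a,b)\sim(c,d)$ iff $ac\in E(G)$ or $bd\in E(H)$. *)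

From mathcomp Require Import all_boot.
Set Implicit Arguments. Unset Strict Implicit. Unset Printing Implicit Defensive.

Section Graphs.
Variable T : finType.
Implicit Types (e : rel T) (x y u v w : T).

Definition simple_graph e := symmetric e /\ irreflexive e.

Definition connected_graph e := forall x y, connect e x y.

Definition walk_of_len e (n : nat) x y : bool :=
  [exists p : n.-tuple T, path e x p && (last x p == y)].

(* shortest-path distance: least n with a walk of length n from x to y
   (for a connected graph this is < #|T|) *)
Definition dist e x y : nat :=
  find (fun n => walk_of_len e n x y) (iota 0 #|T|).

Definition max_dist_from e u v : bool :=
  [forall w, e u w ==> (dist e v w <= dist e u v)].

Definition mutually_max_dist e u v : bool :=
  max_dist_from e u v && max_dist_from e v u.

Definition strong_resolving_graph e : rel T :=
  fun u v => (u != v) && mutually_max_dist e u v.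

Definition independent e (S : {set T}) : bool :=
  [forall x in S, forall y in S, (x != y) ==> ~~ e x y].

Definition indep_number e : nat :=
  \max_(S : {set T} | independent e S) #|S|.
End Graphs.

Section Products.
Variables (V W : finType) (eG : rel V) (eH : rel W).

Definition strong_prod : rel (V * W) :=
  fun x y => [|| (x.1 == y.1) && eH x.2 y.2,
                 eG x.1 y.1 && (x.2 == y.2)
               | eG x.1 y.1 && eH x.2 y.2].

Definition cart_sum : rel (V * W) :=
  fun x y => eG x.1 y.1 || eH x.2 y.2.
End Products.

(* The strong product is the product for which walks combine coordinatewise:
   a walk of length n in G ⊠ H is a pair of walks of length n in G and H, each
   allowed to pause.  Hence d_{G⊠H}((a,b),(c,d)) = max(d_G(a,c), d_H(b,d)).
   With this formula one checks the edge inclusions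
   G_SR ⊠ H_SR ⊆ (G ⊠ H)_SR ⊆ G_SR ⊕ H_SR: for the second, if
   d_H(b,d) <= d_G(a,c) then moving only the first coordinate shows that a and
   c are mutually maximally distant in G.  Adding edges can only decrease the
   independence number. *)
From mathcomp Require Import all_boot.
Set Implicit Arguments. Unset Strict Implicit. Unset Printing Implicit Defensive.

Section Walks.
Variables (T : finType) (e : rel T).
Implicit Types (x y : T) (n k : nat).

Definition reflc : rel T := fun x y => (x == y) || e x y.

(* walks of length exactly n that may stay put; they realise "dist <= n" *)
Definition rwalk n x y : Prop :=
  exists p : seq T, [/\ size p = n, path reflc x p & last x p = y].

Lemma walk_of_lenP n x y :
  reflect (exists p : seq T, [/\ size p = n, path e x p & last x p = y])
          (walk_of_len e n x y).
Proof.
apply: (iffP existsP) => [[p /andP[ep /eqP lp]] | [p [sp ep lp]]].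
  by exists (val p); rewrite size_tuple.
have sp' : size p == n by rewrite sp.
by exists (Tuple sp'); rewrite /= ep lp eqxx.
Qed.

Lemma connect_walk_of_len x y : connect e x y -> exists n, walk_of_len e n x y.
Proof.
by move=> /connectP[p ep ->]; exists (size p); apply/walk_of_lenP; exists p.
Qed.

Lemma walk_of_len_connect n x y : walk_of_len e n x y -> connect e x y.
Proof. by move=> /walk_of_lenP[p [_ ep <-]]; apply/connectP; exists p. Qed.

(* [dist] only searches lengths below #|T|, so walks must first be made simple *)
Lemma walk_of_len_short k x y : walk_of_len e k x y ->
  exists2 k', k' < #|T| & walk_of_len e k' x y.
Proof.
move=> /walk_of_lenP[p [_ ep lp]]; move: lp; case: (shortenP ep) => q eq uq _ lq.
exists (size q); first by have := max_card (mem (x :: q)); rewrite (card_uniqP uq).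
by apply/walk_of_lenP; exists q.
Qed.

Lemma dist_min k x y : walk_of_len e k x y -> dist e x y <= k.
Proof.
move=> wk; have [lt_kT | le_Tk] := ltnP k #|T|.
  by rewrite leqNgt; apply/negP => /(before_find 0); rewrite nth_iota // add0n wk.
by apply: leq_trans le_Tk; rewrite -[X in _ <= X](size_iota 0 #|T|) find_size.
Qed.

Lemma walk_of_len_dist x y : connect e x y -> walk_of_len e (dist e x y) x y.
Proof.
move=> /connect_walk_of_len[k /walk_of_len_short[k' lt_k' wk']].
have has_walk : has (fun n => walk_of_len e n x y) (iota 0 #|T|).
  by apply/hasP; exists k'; rewrite ?mem_iota.
have := nth_find 0 has_walk; rewrite nth_iota ?add0n //.
by rewrite -[X in _ < X](size_iota 0 #|T|) -has_find.
Qed.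

Lemma walk_rwalk n x y : walk_of_len e n x y -> rwalk n x y.
Proof.
move=> /walk_of_lenP[p [sp ep lp]]; exists p; split=> //.
by apply: sub_path ep => u v euv; rewrite /reflc euv orbT.
Qed.

Lemma rwalk_pad n m x y : rwalk n x y -> n <= m -> rwalk m x y.
Proof.
move=> [p [<- ep lp]] le_pm; exists (p ++ nseq (m - size p) y).
rewrite size_cat size_nseq subnKC // cat_path last_cat ep lp; split=> //.
  by elim: (m - size p) => //= k ->; rewrite /reflc eqxx.
by elim: (m - size p).
Qed.

Lemma rwalk_walk n x y : rwalk n x y -> exists2 k, k <= n & walk_of_len e k x y.
Proof.
move=> [p [<- ep <-]]; elim: p x ep => [|z p IHp] x /=.
  by move=> _; exists 0 => //; apply/walk_of_lenP; exists [::].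
move=> /andP[/orP[/eqP <- | exz] ep]; have [k le_kp wk] := IHp _ ep.
  by exists k; first exact: leqW.
exists k.+1 => //; move/walk_of_lenP: wk => [q [sq eq lq]].
by apply/walk_of_lenP; exists (z :: q); rewrite /= exz sq eq lq.
Qed.

Lemma leq_distP n x y : connect e x y -> dist e x y <= n <-> rwalk n x y.
Proof.
move=> cxy; split=> [le_dn | /rwalk_walk[k le_kn /dist_min]].
  exact: rwalk_pad (walk_rwalk (walk_of_len_dist cxy)) le_dn.
by move/leq_trans; apply.
Qed.

Lemma dist_xx x : dist e x x = 0.
Proof.
by apply/eqP; rewrite -leqn0; apply: (@dist_min 0); apply/walk_of_lenP; exists [::].
Qed.

Lemma dist_eq0 x y : connect e x y -> (dist e x y == 0) = (x == y).
Proof.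
move=> cxy; apply/idP/eqP => [|->]; last by rewrite dist_xx.
by rewrite -leqn0 => /(leq_distP _ cxy) [[|? ?] [] //= _ _ ->].
Qed.

Lemma dist_reflc x y : connect e x y -> reflc x y -> dist e x y <= 1.
Proof. by move=> cxy rxy; apply/(leq_distP _ cxy); exists [:: y]; rewrite /= rxy. Qed.

Hypothesis e_sym : symmetric e.

Lemma rwalk_sym n x y : rwalk n x y -> rwalk n y x.
Proof.
move=> [p [sp ep <-]]; exists (rev (belast x p)).
rewrite size_rev size_belast rev_path; split=> //.
  by apply: sub_path ep => u v; rewrite /reflc eq_sym e_sym.
by case: p {sp ep} => //= z p; rewrite rev_cons last_rcons.
Qed.

Lemma dist_sym x y : connect e x y -> dist e x y = dist e y x.
Proof.
move=> cxy; have cyx : connect e y x by rewrite (sym_connect_sym e_sym).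
have le_dist_sym u v : connect e u v -> connect e v u -> dist e u v <= dist e v u.
  by move=> cuv cvu; apply/(leq_distP _ cuv)/rwalk_sym/(leq_distP _ cvu).
by apply/eqP; rewrite eqn_leq !le_dist_sym.
Qed.

End Walks.

Section StrongProductDistance.
Variables (V W : finType) (eG : rel V) (eH : rel W).
Local Notation P := (strong_prod eG eH).

Lemma reflc_strong_prod x y :
  reflc P x y = reflc eG x.1 y.1 && reflc eH x.2 y.2.
Proof.
case: x y => [a b] [c d]; rewrite /reflc /strong_prod /= xpair_eqE.
by case: (a == c); case: (b == d); case: (eG a c); case: (eH b d).
Qed.

Lemma rwalk_strong_prod n a b c d :
  rwalk P n (a, b) (c, d) <-> rwalk eG n a c /\ rwalk eH n b d.
Proof.
split=> [[p [sp ep lp]] | [[p [sp ep <-]] [q [sq eq <-]]]].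
  split; [exists (map fst p) | exists (map snd p)]; rewrite size_map.
    rewrite (last_map fst p (a, b)) lp -[a]/((a, b).1) path_map; split=> //.
    by apply: sub_path ep => u v; rewrite reflc_strong_prod => /andP[].
  rewrite (last_map snd p (a, b)) lp -[b]/((a, b).2) path_map; split=> //.
  by apply: sub_path ep => u v; rewrite reflc_strong_prod => /andP[].
exists (zip p q); rewrite size_zip sp sq minnn.
rewrite -sq in sp; elim: p q a b sp ep eq {sq} => [|z p IHp] [|z' q] a b //= [sp].
move=> /andP[ez ep] /andP[ez' eq]; have [_ pzq lzq] := IHp q z z' sp ep eq.
by rewrite reflc_strong_prod ez ez' pzq lzq.
Qed.

Lemma connect_strong_prod a b c d :
  connect eG a c -> connect eH b d -> connect P (a, b) (c, d).
Proof.
move=> cac cbd; set n := maxn (dist eG a c) (dist eH b d).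
have [|k _] := @rwalk_walk _ P n (a, b) (c, d); last exact: walk_of_len_connect.
apply/rwalk_strong_prod.
by split; [apply/(leq_distP _ cac)/leq_maxl | apply/(leq_distP _ cbd)/leq_maxr].
Qed.

Lemma dist_strong_prod a b c d : connect eG a c -> connect eH b d ->
  dist P (a, b) (c, d) = maxn (dist eG a c) (dist eH b d).
Proof.
move=> cac cbd; have cP := connect_strong_prod cac cbd.
apply/eqP; rewrite eqn_leq; apply/andP; split.
  apply/(leq_distP _ cP)/rwalk_strong_prod.
  by split; [apply/(leq_distP _ cac)/leq_maxl | apply/(leq_distP _ cbd)/leq_maxr].
have /(leq_distP _ cP)/rwalk_strong_prod[wG wH] := leqnn (dist P (a, b) (c, d)).
by rewrite geq_max; apply/andP; split; [apply/(leq_distP _ cac) | apply/(leq_distP _ cbd)].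
Qed.

End StrongProductDistance.

Lemma leq_indep_number (T : finType) (e1 e2 : rel T) :
  subrel e2 e1 -> indep_number e1 <= indep_number e2.
Proof.
move=> e21; apply/bigmax_leqP => S indS; apply: leq_bigmax_cond.
apply/forall_inP => x xS; apply/forall_inP => y yS; apply/implyP => neq_xy.
move/forall_inP: indS => /(_ x xS)/forall_inP/(_ y yS)/implyP/(_ neq_xy).
by apply: contra; apply: e21.
Qed.

Lemma strong_prod_sym (V W : finType) (eG : rel V) (eH : rel W) :
  symmetric eG -> symmetric eH -> symmetric (strong_prod eG eH).
Proof.
by move=> sG sH [a b] [c d]; rewrite /strong_prod /= (sG a) (sH b) (eq_sym a) (eq_sym b).
Qed.

Lemma srg_sym (T : finType) (e : rel T) : symmetric (strong_resolving_graph e).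
Proof.
move=> u v; rewrite /strong_resolving_graph /mutually_max_dist eq_sym.
by rewrite (andbC (max_dist_from e u v)).
Qed.

Section StrongResolvingGraph.
Variables (T : finType) (e : rel T).
Hypotheses (e_sym : symmetric e) (e_conn : connected_graph e).

Lemma max_dist_from_reflc u v w :
  max_dist_from e u v -> reflc e u w -> dist e v w <= dist e u v.
Proof.
move=> muv /orP[/eqP <- | euw]; first by rewrite dist_sym.
by move/forallP: muv => /(_ w)/implyP; apply.
Qed.

Lemma srg_dist_gt0 u v : strong_resolving_graph e u v -> 0 < dist e u v.
Proof. by move=> /andP[neq_uv _]; rewrite lt0n dist_eq0. Qed.

End StrongResolvingGraph.

Section StrongProductSRG.
Variables (V W : finType) (eG : rel V) (eH : rel W).
Hypotheses (sG : symmetric eG) (sH : symmetric eH).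
Hypotheses (cG : connected_graph eG) (cH : connected_graph eH).
Local Notation P := (strong_prod eG eH).
Local Notation SG := (strong_resolving_graph eG).
Local Notation SH := (strong_resolving_graph eH).

Lemma dist_strong_prodE a b c d :
  dist P (a, b) (c, d) = maxn (dist eG a c) (dist eH b d).
Proof. exact: dist_strong_prod (cG a c) (cH b d). Qed.

Lemma max_dist_from_strong_prod x y : strong_prod SG SH x y -> max_dist_from P x y.
Proof.
case: x y => [a b] [c d] sxy; apply/forallP => -[a' b']; apply/implyP => Pw.
have /andP[ra rb] : reflc eG a a' && reflc eH b b'.
  by rewrite -(reflc_strong_prod eG eH (a, b) (a', b')) /reflc Pw orbT.
rewrite !dist_strong_prodE geq_max; move: sxy; rewrite /strong_prod /=.
case/or3P => [/andP[/eqP <- Sbd] | /andP[Sac /eqP <-] | /andP[Sac Sbd]].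
- have mbd : max_dist_from eH b d by case/andP: Sbd => _ /andP[].
  rewrite dist_xx max0n (max_dist_from_reflc sH cH mbd rb) andbT.
  exact: leq_trans (dist_reflc (cG a a') ra) (srg_dist_gt0 cH Sbd).
- have mac : max_dist_from eG a c by case/andP: Sac => _ /andP[].
  rewrite dist_xx maxn0 (max_dist_from_reflc sG cG mac ra).
  exact: leq_trans (dist_reflc (cH b b') rb) (srg_dist_gt0 cG Sac).
- have mac : max_dist_from eG a c by case/andP: Sac => _ /andP[].
  have mbd : max_dist_from eH b d by case/andP: Sbd => _ /andP[].
  rewrite (leq_trans (max_dist_from_reflc sG cG mac ra) (leq_maxl _ _)).
  by rewrite (leq_trans (max_dist_from_reflc sH cH mbd rb) (leq_maxr _ _)).
Qed.

Lemma strong_prod_srg_sub x y :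
  strong_prod SG SH x y -> strong_resolving_graph P x y.
Proof.
move=> sxy; have syx : strong_prod SG SH y x.
  by rewrite strong_prod_sym //; apply: srg_sym.
rewrite /strong_resolving_graph /mutually_max_dist !max_dist_from_strong_prod //.
case: x y {syx} sxy => [a b] [c d]; rewrite andbT -pair_eqE /= negb_and.
by case/or3P => /andP[] => [_ /andP[-> _] | /andP[-> _] _ | /andP[-> _] _]; rewrite ?orbT.
Qed.

Lemma max_dist_from_strong_prod_fst a b c d :
  dist eH b d <= dist eG a c -> max_dist_from P (a, b) (c, d) ->
  max_dist_from eG a c.
Proof.
move=> le_HG mP; apply/forallP => a'; apply/implyP => ea.
have Pw : P (a, b) (a', b) by rewrite /strong_prod /= ea eqxx orbT.
move/forallP: mP => /(_ (a', b))/implyP/(_ Pw).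
by rewrite !dist_strong_prodE (maxn_idPl le_HG) geq_max => /andP[].
Qed.

Lemma max_dist_from_strong_prod_snd a b c d :
  dist eG a c <= dist eH b d -> max_dist_from P (a, b) (c, d) ->
  max_dist_from eH b d.
Proof.
move=> le_GH mP; apply/forallP => b'; apply/implyP => eb.
have Pw : P (a, b) (a, b') by rewrite /strong_prod /= eb eqxx.
move/forallP: mP => /(_ (a, b'))/implyP/(_ Pw).
by rewrite !dist_strong_prodE (maxn_idPr le_GH) geq_max => /andP[].
Qed.

Lemma srg_strong_prod_sub x y :
  strong_resolving_graph P x y -> cart_sum SG SH x y.
Proof.
case: x y => [a b] [c d] /andP[neq_xy /andP[mxy myx]]; rewrite /cart_sum /=.
have dG_sym := dist_sym sG (cG a c); have dH_sym := dist_sym sH (cH b d).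
rewrite /strong_resolving_graph /mutually_max_dist.
case: (leqP (dist eH b d) (dist eG a c)) => [le_HG | lt_GH].
- have le_HG' : dist eH d b <= dist eG c a by rewrite -dG_sym -dH_sym.
  rewrite (max_dist_from_strong_prod_fst le_HG mxy).
  rewrite (max_dist_from_strong_prod_fst le_HG' myx) !andbT; apply/orP; left.
  apply: contra_neq neq_xy => eq_ac; move: le_HG.
  by rewrite eq_ac dist_xx leqn0 (dist_eq0 (cH b d)) => /eqP ->.
- have le_GH' : dist eG c a <= dist eH d b by rewrite -dG_sym -dH_sym ltnW.
  rewrite (max_dist_from_strong_prod_snd (ltnW lt_GH) mxy).
  rewrite (max_dist_from_strong_prod_snd le_GH' myx) !andbT; apply/orP; right.
  by rewrite -(dist_eq0 (cH b d)) -lt0n (leq_ltn_trans _ lt_GH).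
Qed.

End StrongProductSRG.

Theorem corollary8 (V W : finType) (eG : rel V) (eH : rel W) :
  simple_graph eG -> simple_graph eH ->
  connected_graph eG -> connected_graph eH ->
  indep_number (strong_prod (strong_resolving_graph eG) (strong_resolving_graph eH))
    >= indep_number (strong_resolving_graph (strong_prod eG eH))
  /\ indep_number (strong_resolving_graph (strong_prod eG eH))
    >= indep_number (cart_sum (strong_resolving_graph eG) (strong_resolving_graph eH)).
Proof.
move=> [sG _] [sH _] cG cH; split; apply: leq_indep_number => x y.
  exact: strong_prod_srg_sub.
exact: srg_strong_prod_sub.
Qed.
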